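(* Let $L$ be a finite-dimensional Lie algebra over a field $F$ and let \[ 0 = A_0 < A_1 < \cdots < A_n = L, \qquad 0 = B_0 < B_1 < \cdots < B_n = L \] be chief series for $L$. Then there is a bijection between the chief factors $A_i/A_{i-1}$ of the first series and the chief factors $B_j/B_{j-1}$ of the second series such that corresponding factors are isomorphic as $L$-modules and such that the Frattini chief factors in the two series correspond to each other.
   Context: A chief series is a chain of ideals of $L$ in which each successive quotient $A_i/A_{i-1}$ is a chief factor, i.e. there is no ideal of $L$ strictly between $A_{i-1}$ and $A_i$. The Frattini ideal $\phi(L)$ is the largest ideal of $L$ contained in the intersection of all maximal subalgebras. A chief factor $A/B$ is a Frattini chief factor if $A/B \subseteq \phi(L/B)$. *)

From HB Require Import structures.
From mathcomp Require Import all_boot all_order all_algebra all_fingroup.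
Set Implicit Arguments. Unset Strict Implicit. Unset Printing Implicit Defensive.
Import GRing.Theory.
Local Open Scope ring_scope.


Definition is_lie (F : fieldType) (L : vectType F) (br : L -> L -> L) : Prop :=
  [/\ (forall (a : F) (x y z : L), br (a *: x + y) z = a *: br x z + br y z),
      (forall (a : F) (x y z : L), br z (a *: x + y) = a *: br z x + br z y),
      (forall x : L, br x x = 0) &
      (forall x y z : L, br x (br y z) + br y (br z x) + br z (br x y) = 0)].

Definition subalgebra (F : fieldType) (L : vectType F) (br : L -> L -> L)
  (U : {vspace L}) : Prop :=
  forall x y, x \in U -> y \in U -> br x y \in U.

Definition ideal (F : fieldType) (L : vectType F) (br : L -> L -> L)
  (U : {vspace L}) : Prop :=
  forall x y, y \in U -> br x y \in U.

Definition maximal_subalgebra (F : fieldType) (L : vectType F)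
  (br : L -> L -> L) (M : {vspace L}) : Prop :=
  [/\ subalgebra br M, M != fullv &
      forall N : {vspace L}, subalgebra br N -> (M <= N)%VS ->
        N = M \/ N = fullv].

Definition chief_series (F : fieldType) (L : vectType F) (br : L -> L -> L)
  (n : nat) (A : nat -> {vspace L}) : Prop :=
  [/\ A 0%N = 0%VS, A n = fullv,
      (forall i, (i <= n)%N -> ideal br (A i)),
      (forall i, (i < n)%N -> (A i <= A i.+1)%VS /\ A i != A i.+1) &
      (forall i, (i < n)%N -> forall I : {vspace L}, ideal br I ->
          (A i <= I)%VS -> (I <= A i.+1)%VS -> I = A i \/ I = A i.+1)].

(* A/B and C/D (B <= A, D <= C ideals) are isomorphic as L-modules, where L
   acts on A/B by x.(a + B) = [x,a] + B.  Spelled out: there is a linear map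
   f (any linear map A/B -> C/D lifts to a linear map L -> L) with
   f(A) <= C, f(B) <= D, inducing a bijection A/B -> C/D which commutes
   with the L-action modulo D. *)
Definition factor_iso (F : fieldType) (L : vectType F) (br : L -> L -> L)
  (A B C D : {vspace L}) : Prop :=
  exists f : 'End(L),
    [/\ (f @: A <= C)%VS, (f @: B <= D)%VS,
        (C <= f @: A + D)%VS,
        (forall a, a \in A -> f a \in D -> a \in B) &
        (forall x a, a \in A -> f (br x a) - br x (f a) \in D)].

(* A/B is a Frattini chief factor: A/B <= phi(L/B), where phi(L/B) is the
   largest ideal of L/B contained in all maximal subalgebras of L/B.
   Via the correspondence theorem (ideals/maximal subalgebras of L/B are
   I/B, M/B with I, M ideals/maximal subalgebras of L containing B):
   A/B <= phi(L/B) iff A/B lies in some ideal I/B of L/B contained in every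
   maximal subalgebra M/B of L/B. *)
Definition frattini_factor (F : fieldType) (L : vectType F) (br : L -> L -> L)
  (A B : {vspace L}) : Prop :=
  exists I : {vspace L},
    [/\ ideal br I, (B <= I)%VS, (A <= I)%VS &
        forall M : {vspace L}, maximal_subalgebra br M -> (B <= M)%VS ->
          (I <= M)%VS].

(* Jordan-Hoelder, by induction on the length of the series.  If the top
   terms X, Y of the two series differ, then X + Y = L and D := X :&: Y is a
   chief factor of both, so after refining both series through a chief
   series of D it remains to pair off the four factors X/D, Y/D, L/X, L/Y.
   The perspectivities X/D ~ L/Y and Y/D ~ L/X are always L-module
   isomorphisms, and they respect Frattini-ness unless one of them, say
   X/D ~ L/Y, joins a non-Frattini X/D to a Frattini L/Y.  In that case a
   Frattini chief factor is abelian (elements of a Frattini ideal act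
   nilpotently, by a Fitting decomposition, and Engel's theorem applies), so
   a maximal subalgebra M >= D not containing X complements both X/D and
   Y/D; hence X/D ~ Y/D, Y/D is not Frattini, L/X is Frattini, and the
   pairing X/D - Y/D, L/X - L/Y works instead. *)

From HB Require Import structures.
From mathcomp Require Import all_boot all_order all_algebra all_fingroup.
From mathcomp Require Import zify.
From Stdlib Require Import Classical.
Set Implicit Arguments. Unset Strict Implicit. Unset Printing Implicit Defensive.
Import GRing.Theory.
Local Open Scope ring_scope.

Lemma eventually_constant (T : Type) (c : nat -> T) (u : nat -> nat) d :
  (forall j, (u j <= d)%N) -> (forall j, c j <> c j.+1 -> (u j < u j.+1)%N) ->
  (forall j, c j = c j.+1 -> c j.+1 = c j.+2) ->
  forall i, (d <= i)%N -> c i = c d.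
Proof.
move=> ub_u incr_u step.
have [j le_jd stall_j] : exists2 j, (j <= d)%N & c j = c j.+1.
  apply: NNPP => nostall.
  have grow j : (j <= d.+1)%N -> (j <= u j)%N.
    elim: j => // j IHj lt_jd.
    have neq : c j <> c j.+1 by move=> E; apply: nostall; exists j.
    by have := incr_u j neq; have := IHj (ltnW lt_jd); lia.
  by have := grow d.+1 (leqnn _); have := ub_u d.+1; lia.
have stall m : c (j + m)%N = c (j + m).+1.
  by elim: m => [|m IHm]; rewrite ?addn0 // addnS; apply: step.
have const m : c (j + m)%N = c j.
  by elim: m => [|m IHm]; rewrite ?addn0 // addnS -stall.
by move=> i le_di; rewrite -(subnKC (leq_trans le_jd le_di)) -(subnKC le_jd) !const.
Qed.

Section Vspace.
Variables (F : fieldType) (L : vectType F).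

Lemma dimv_ltn (U V : {vspace L}) : (U <= V)%VS -> V <> U -> (\dim U < \dim V)%N.
Proof.
move=> sUV neVU; rewrite (ltn_leqif (dimv_leqif_eq sUV)).
by apply/negP => /eqP eUV; apply: neVU.
Qed.

Lemma exists_maximal (P : {vspace L} -> Prop) U : P U ->
  exists M, [/\ P M, (U <= M)%VS & forall V, P V -> (M <= V)%VS -> V = M].
Proof.
have [k] := ubnP (\dim {:L} - \dim U); elim: k U => // k IHk U codimU PU.
have [[V [PV sUV neVU]] | noV] :=
  classic (exists V, [/\ P V, (U <= V)%VS & V <> U]).
  have [|M [PM sVM maxM]] := IHk V _ PV.
    by have := dimv_ltn sUV neVU; have := dimvS (subvf V); lia.
  by exists M; split=> //; apply: subv_trans sVM.
exists U; split=> // V PV sUV; apply: NNPP => neVU.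
by apply: noV; exists V.
Qed.

Lemma addv_cap_supplement (M M' X Y : {vspace L}) : (X <= M')%VS ->
  (M' + Y)%VS = fullv -> (M + X)%VS = fullv -> (M :&: M' + Y + X)%VS = fullv.
Proof.
move=> sXM' eM'Y eMX; apply/eqP; rewrite eqEsubv subvf /=; apply/subvP => v _.
have : v \in (M' + Y)%VS by rewrite eM'Y memvf.
move=> /memv_addP[m' m'M' [y yY ->]].
have : m' \in (M + X)%VS by rewrite eMX memvf.
move=> /memv_addP[m mM [x xX e_m']].
have mM' : m \in M' by rewrite -[m](addrK x) -e_m' rpredB // (subvP sXM').
rewrite e_m' -addrA (addrC x) addrA memv_add // memv_add //.
by rewrite memv_cap mM.
Qed.

Lemma addv_pi1_id (U V : {vspace L}) u : u \in (U :\: V)%VS -> addv_pi1 U V u = u.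
Proof. by apply: daddv_pi_id; rewrite capv_diff. Qed.

Lemma addv_pi1_eq0 (U V : {vspace L}) v : v \in V -> addv_pi1 U V v = 0.
Proof.
move=> vV; apply: (@addIr _ v); rewrite add0r -[RHS](@addv_pi1_pi2 _ _ U V v).
  by rewrite addv_pi2_id.
exact: (subvP (addvSr U V)).
Qed.

Lemma addv_pi1_compl (U V : {vspace L}) w : w \in (U + V)%VS -> w - addv_pi1 U V w \in V.
Proof. by move=> wUV; rewrite -{1}(addv_pi1_pi2 wUV) addrC addKr memv_pi2. Qed.

Lemma addv_pi1_cap0 (U V : {vspace L}) w : addv_pi1 U V w \in V -> addv_pi1 U V w = 0.
Proof.
move=> piV; apply/eqP; rewrite -memv0 -(capv_diff U V) memv_cap piV andbT.
exact: memv_pi.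
Qed.

End Vspace.

Section LieAlgebra.
Variables (F : fieldType) (L : vectType F) (br : L -> L -> L).
Hypothesis lieL : is_lie br.

Lemma brPl a x y z : br (a *: x + y) z = a *: br x z + br y z.
Proof. by case: lieL. Qed.

Lemma brPr a x y z : br z (a *: x + y) = a *: br z x + br z y.
Proof. by case: lieL. Qed.

Lemma br_alt x : br x x = 0.
Proof. by case: lieL. Qed.

Lemma br0l z : br 0 z = 0.
Proof.
by apply: (@addrI _ (br 0 z)); rewrite addr0 -{1}[br 0 z]scale1r -brPl scale1r addr0.
Qed.

Lemma br0r z : br z 0 = 0.
Proof.
by apply: (@addrI _ (br z 0)); rewrite addr0 -{1}[br z 0]scale1r -brPr scale1r addr0.
Qed.

Lemma brDl x y z : br (x + y) z = br x z + br y z.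
Proof. by rewrite -[x]scale1r brPl !scale1r. Qed.

Lemma brDr x y z : br z (x + y) = br z x + br z y.
Proof. by rewrite -[x]scale1r brPr !scale1r. Qed.

Lemma brZl a x z : br (a *: x) z = a *: br x z.
Proof. by rewrite -[a *: x]addr0 brPl br0l addr0. Qed.

Lemma brZr a x z : br z (a *: x) = a *: br z x.
Proof. by rewrite -[a *: x]addr0 brPr br0r addr0. Qed.

Lemma brNl x z : br (- x) z = - br x z.
Proof. by rewrite -scaleN1r brZl scaleN1r. Qed.

Lemma brNr x z : br z (- x) = - br z x.
Proof. by rewrite -scaleN1r brZr scaleN1r. Qed.

Lemma brBl x y z : br (x - y) z = br x z - br y z.
Proof. by rewrite brDl brNl. Qed.

Lemma br_anticomm x y : br x y = - br y x.
Proof.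
apply/eqP; rewrite -addr_eq0.
by have := br_alt (x + y); rewrite brDl !brDr !br_alt add0r addr0 => ->.
Qed.

Lemma br_jacobi x a b : br x (br a b) = br (br x a) b + br a (br x b).
Proof.
have [_ _ _ J] := lieL; apply/eqP; rewrite -subr_eq0 -(J x a b).
by rewrite (br_anticomm b x) brNr (br_anticomm b (br x a)) opprD addrA addrAC.
Qed.

(** * Ideals and maximal subalgebras *)

Definition bracket_sub (S W V : {vspace L}) :=
  forall x w, x \in S -> w \in W -> br x w \in V.

Lemma bracket_subDl S1 S2 W V :
  bracket_sub S1 W V -> bracket_sub S2 W V -> bracket_sub (S1 + S2)%VS W V.
Proof.
move=> h1 h2 x w /memv_addP[x1 x1S [x2 x2S ->]] wW.
by rewrite brDl; apply: rpredD; [apply: h1 | apply: h2].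
Qed.

Lemma bracket_subDr S W1 W2 V :
  bracket_sub S W1 V -> bracket_sub S W2 V -> bracket_sub S (W1 + W2)%VS V.
Proof.
move=> h1 h2 x w xS /memv_addP[w1 w1W [w2 w2W ->]].
by rewrite brDr; apply: rpredD; [apply: h1 | apply: h2].
Qed.

Lemma bracket_subSl S1 S2 W V :
  (S1 <= S2)%VS -> bracket_sub S2 W V -> bracket_sub S1 W V.
Proof. by move=> sS12 h x w /(subvP sS12); apply: h. Qed.

Lemma ideal_brl I x y : ideal br I -> y \in I -> br y x \in I.
Proof. by move=> idI yI; rewrite br_anticomm rpredN idI. Qed.

Lemma ideal_bracket_sub S I : ideal br I -> bracket_sub S I I.
Proof. by move=> idI x w _; apply: idI. Qed.

Lemma ideal_subalgebra I : ideal br I -> subalgebra br I.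
Proof. by move=> idI x y _; apply: idI. Qed.

Lemma ideal0 : ideal br 0%VS.
Proof. by move=> x y; rewrite memv0 => /eqP ->; rewrite br0r mem0v. Qed.

Lemma ideal_add I J : ideal br I -> ideal br J -> ideal br (I + J)%VS.
Proof.
by move=> idI idJ x _ /memv_addP[u uI [v vJ ->]]; rewrite brDr memv_add ?idI ?idJ.
Qed.

Lemma ideal_cap I J : ideal br I -> ideal br J -> ideal br (I :&: J)%VS.
Proof. by move=> idI idJ x y /memv_capP[yI yJ]; rewrite memv_cap idI ?idJ. Qed.

Lemma subalgebra_cap U V :
  subalgebra br U -> subalgebra br V -> subalgebra br (U :&: V)%VS.
Proof.
move=> sU sV x y /memv_capP[xU xV] /memv_capP[yU yV].
by rewrite memv_cap sU ?sV.
Qed.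

Lemma subalgebra_add_ideal U I :
  subalgebra br U -> ideal br I -> subalgebra br (U + I)%VS.
Proof.
move=> sU idI x y /memv_addP[u uU [v vI ->]] /memv_addP[u' u'U [v' v'I ->]].
rewrite brDl !brDr -addrA; apply: memv_add; first exact: sU.
by rewrite !rpredD //; [apply: idI | apply: ideal_brl | apply: idI].
Qed.

Lemma maximal_subalgebra_above U : subalgebra br U -> U != fullv ->
  exists2 M, maximal_subalgebra br M & (U <= M)%VS.
Proof.
move=> sU neU.
have [M [[sM neM] sUM maxM]] :=
  @exists_maximal _ _ (fun V => subalgebra br V /\ V != fullv) U (conj sU neU).
exists M => //; split=> // V sV sMV.
by have [-> | neV] := eqVneq V fullv; [right | left; apply: maxM].
Qed.

Lemma maximal_add_ideal M I : maximal_subalgebra br M -> ideal br I ->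
  ~~ (I <= M)%VS -> (M + I)%VS = fullv.
Proof.
move=> [sM _ maxM] idI nsIM.
have [eM | //] := maxM _ (subalgebra_add_ideal sM idI) (addvSl _ _).
by move: nsIM; rewrite -eM addvSr.
Qed.

(** * Frattini chief factors are abelian *)

Definition in_frattini (A B : {vspace L}) :=
  forall M, maximal_subalgebra br M -> (B <= M)%VS -> (A <= M)%VS.

Lemma frattini_factorE A B : ideal br A -> ideal br B ->
  frattini_factor br A B <-> in_frattini A B.
Proof.
move=> idA idB; split=> [[I [_ _ sAI sIM]] M maxM sBM | frA].
  exact: subv_trans sAI (sIM M maxM sBM).
exists (A + B)%VS; split; [exact: ideal_add | exact: addvSr | exact: addvSl |].
by move=> M maxM sBM; rewrite subv_add sBM frA.
Qed.

Definition chief_factor (A B : {vspace L}) :=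
  [/\ ideal br A, ideal br B, (B <= A)%VS, B != A &
      forall I, ideal br I -> (B <= I)%VS -> (I <= A)%VS -> I = B \/ I = A].

Definition adn (x : L) (j : nat) : L -> L := iter j (br x).
Arguments adn : simpl never.

Lemma adn_linear x j : linear (adn x j).
Proof. by move=> a u v; rewrite /adn; elim: j => //= j ->; rewrite brPr. Qed.

HB.instance Definition _ x j :=
  GRing.isLinear.Build F L L *:%R (adn x j) (adn_linear x j).

Lemma adnS x j v : adn x j.+1 v = br x (adn x j v).
Proof. by []. Qed.

Lemma adnSr x j v : adn x j.+1 v = adn x j (br x v).
Proof. exact: iterSr. Qed.

Definition ad_nil_mod (Y : {vspace L}) (x : L) := exists k, forall v, adn x k v \in Y.

Definition null_vector_mod (S W W0 : {vspace L}) :=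
  exists2 v, v \in W & v \notin W0 /\ forall x, x \in S -> br x v \in W0.

Lemma subalgebra_add_line H v : subalgebra br H ->
  (forall h, h \in H -> br h v \in H) -> subalgebra br (H + <[v]>)%VS.
Proof.
move=> sH nHv a b /memv_addP[h hH [u /vlineP[k ->] ->]].
move=> /memv_addP[h' h'H [u' /vlineP[k' ->] ->]].
apply: (subvP (addvSl _ _)).
rewrite brDl !brDr !brZl !brZr br_alt !scaler0 addr0 !rpredD ?rpredZ //.
- exact: sH.
- exact: nHv.
by rewrite br_anticomm rpredN nHv.
Qed.

Section ModuloIdeal.
Variable Y : {vspace L}.
Hypothesis idY : ideal br Y.

Lemma adn_mem x j y : y \in Y -> adn x j y \in Y.
Proof. by move=> yY; elim: j => //= j; apply: idY. Qed.

(* Leibniz rule for the powers of ad x, modulo Y. *)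
Lemma adn_br x s p q a b : (p + q)%N = s ->
  adn x p a \in Y -> adn x q b \in Y -> adn x s (br a b) \in Y.
Proof.
elim: s p q a b => [|s IHs] [|p] [|q] a b // eq_s pa qb.
- exact: ideal_brl.
- by apply: adn_mem; apply: ideal_brl.
- by apply: adn_mem; apply: idY.
rewrite adnSr br_jacobi linearD rpredD //.
  by apply: (IHs p q.+1); [lia | rewrite -adnSr |].
by apply: (IHs p.+1 q); [lia | | rewrite -adnSr].
Qed.

Section Fitting.
Variable x : L.

Let N := (\dim {:L}).+1.
Let K j := (linfun (adn x j) @^-1: Y)%VS.
Let I j := (limg (linfun (adn x j)) + Y)%VS.

Lemma mem_adn_preim j v : (v \in K j) = (adn x j v \in Y).
Proof. by rewrite -memv_preim lfunE. Qed.

Lemma adn_imageP j v :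
  reflect (exists w, exists2 y, y \in Y & v = adn x j w + y) (v \in I j).
Proof.
apply: (iffP memv_addP) => [[u /memv_imgP[w _ ->] [y yY ->]] | [w [y yY ->]]].
  by exists w; exists y; rewrite ?lfunE.
by exists (adn x j w); [rewrite -lfunE memv_img ?memvf | exists y].
Qed.

Lemma ad_kernel_stable : K (N + N)%N = K N.
Proof.
have sK j : (K j <= K j.+1)%VS.
  by apply/subvP => v; rewrite !mem_adn_preim adnS => /idY.
have incr j : K j <> K j.+1 -> (\dim (K j) < \dim (K j.+1))%N.
  by move=> neK; apply: dimv_ltn (sK j) (nesym neK).
have step j : K j = K j.+1 -> K j.+1 = K j.+2.
  move=> eK; apply/eqP; rewrite eqEsubv sK /=; apply/subvP => v.
  rewrite !mem_adn_preim => vK.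
  have : br x v \in K j.+1 by rewrite mem_adn_preim -adnSr.
  by rewrite -eK mem_adn_preim -adnSr.
have const := eventually_constant (fun j => dimvS (subvf (K j))) incr step.
by rewrite !const /N //; lia.
Qed.

Lemma ad_image_stable : I (N + N)%N = I N.
Proof.
have sI j : (I j.+1 <= I j)%VS.
  apply/subvP => v /adn_imageP[w [y yY ->]]; apply/adn_imageP.
  by exists (br x w); exists y; rewrite // adnSr.
have incr j : I j <> I j.+1 ->
    (\dim {:L} - \dim (I j) < \dim {:L} - \dim (I j.+1))%N.
  by move=> neI; have := dimv_ltn (sI j) neI; have := dimvS (subvf (I j)); lia.
have step j : I j = I j.+1 -> I j.+1 = I j.+2.
  move=> eI; apply/eqP; rewrite eqEsubv sI andbT.
  apply/subvP => v /adn_imageP[w [y yY ->]].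
  have /adn_imageP[w' [y' y'Y e_w]] : adn x j w \in I j.+1.
    by rewrite -eI; apply/adn_imageP; exists w; exists 0; rewrite ?mem0v ?addr0.
  apply/adn_imageP; exists w'; exists (br x y' + y); first by rewrite rpredD ?idY.
  by rewrite adnS e_w brDr addrA.
have const := eventually_constant (fun j => leq_subr _ _) incr step.
by rewrite !const /N //; lia.
Qed.

Lemma ad_kernel_subalgebra : subalgebra br (K N).
Proof.
move=> a b aK bK; rewrite -ad_kernel_stable mem_adn_preim.
by rewrite !mem_adn_preim in aK bK; apply: (adn_br _ aK bK).
Qed.

(* Fitting decomposition of ad x modulo Y, with the image part inside C. *)
Lemma ad_fitting_sum C : ideal br C -> x \in C -> (K N + C)%VS = fullv.
Proof.
move=> idC xC; apply/eqP; rewrite eqEsubv subvf /=; apply/subvP => v _.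
have /adn_imageP[w [y yY e_v]] : adn x N v \in I (N + N)%N.
  by rewrite ad_image_stable; apply/adn_imageP; exists v; exists 0; rewrite ?mem0v ?addr0.
rewrite -[v](subrK (adn x N w)) memv_add //.
  have e_w : adn x N (adn x N w) = adn x (N + N) w by rewrite /adn iterD.
  by rewrite mem_adn_preim linearB /= e_v e_w addrAC subrr add0r.
by rewrite /N adnS ideal_brl.
Qed.

End Fitting.

(* ker (ad x)^N is a subalgebra supplementing the Frattini ideal C. *)
Lemma frattini_ad_nil C : ideal br C -> in_frattini C Y ->
  {in C, forall x, ad_nil_mod Y x}.
Proof.
move=> idC frC x xC; set N := (\dim {:L}).+1.
set K := (linfun (adn x N) @^-1: Y)%VS.
have sYK : (Y <= K)%VS by apply/subvP => y yY; rewrite -memv_preim lfunE adn_mem.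
have [eK | neK] := eqVneq K fullv.
  by exists N => v; have := memvf v; rewrite -eK -memv_preim lfunE.
have [M maxM sKM] := maximal_subalgebra_above (@ad_kernel_subalgebra x) neK.
have sCM := frC M maxM (subv_trans sYK sKM).
case: maxM => _ /negP[]; rewrite eqEsubv subvf -(ad_fitting_sum idC xC).
by rewrite subv_add sKM.
Qed.

Lemma engel_extend S H W W0 v0 w1 :
  bracket_sub S W W -> bracket_sub S W0 W0 -> v0 \in S ->
  (S <= H + <[v0]>)%VS -> (forall h, h \in H -> br h v0 \in H) ->
  ad_nil_mod Y v0 -> (Y <= W0)%VS ->
  w1 \in W -> w1 \notin W0 -> (forall h, h \in H -> br h w1 \in W0) ->
  null_vector_mod S W W0.
Proof.
move=> sSW sSW0 v0S sSH nHv0 [k nil_v0] sYW0 w1W w1W0 nHw1.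
have orbit j : adn v0 j w1 \in W /\ forall h, h \in H -> br h (adn v0 j w1) \in W0.
  elim: j => [|j [IWj IHj]]; first by split.
  rewrite adnS; split; first exact: sSW.
  move=> h hH; rewrite br_jacobi rpredD //; first by apply: IHj; apply: nHv0.
  by apply: sSW0 v0S _; apply: IHj.
have ex_m : exists m, adn v0 m w1 \in W0 by exists k; apply: (subvP sYW0).
case: (ex_minnP ex_m) => m m_W0 min_m.
have m_gt0 : (0 < m)%N by case: m m_W0 {min_m} => // m0W0; case/negP: w1W0.
exists (adn v0 m.-1 w1); first by case: (orbit m.-1).
split; first by apply/negP => /min_m; lia.
move=> x /(subvP sSH) /memv_addP[h hH [u /vlineP[a ->] ->]].
rewrite brDl brZl rpredD ?rpredZ //; first by case: (orbit m.-1) => _; apply.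
by rewrite -adnS prednK.
Qed.

(* Engel's theorem modulo Y, by induction on dim S: a maximal subalgebra
   H >= Y of S is normalised by some v0, so S = H + <[v0]>. *)
Lemma engel_mod S W W0 : subalgebra br S -> (Y <= S)%VS ->
  {in S, forall x, ad_nil_mod Y x} -> (Y <= W0)%VS -> ~~ (W <= W0)%VS ->
  bracket_sub S W W -> bracket_sub S W0 W0 -> null_vector_mod S W W0.
Proof.
have [n] := ubnP (\dim S); elim: n S W W0 => // n IHn S W W0 dimS.
move=> sS sYS nilS sYW0 nsWW0 sSW sSW0.
have [sSY | nsSY] := boolP (S <= Y)%VS.
  have [v vW vW0] := subvPn nsWW0; exists v => //; split=> // x xS.
  by apply: (subvP sYW0); apply: ideal_brl => //; apply: (subvP sSY).
pose P H := [/\ subalgebra br H, (Y <= H)%VS, (H <= S)%VS & H != S].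
have PY : P Y.
  by split=> //; [exact: ideal_subalgebra | apply: contraNneq nsSY => ->].
have [H [[sH sYH sHS neHS] _ maxH]] := exists_maximal PY.
have dimH : (\dim H < n)%N.
  by have := dimv_ltn sHS (fun e => negP neHS (introT eqP (esym e))); lia.
have nilH : {in H, forall x, ad_nil_mod Y x} by move=> x /(subvP sHS)/nilS.
have nsSH : ~~ (S <= H)%VS by apply: contra neHS => sSH; rewrite eqEsubv sHS.
have [v0 v0S [v0H nHv0]] :=
  IHn H S H dimH sH sYH nilH sYH nsSH (bracket_subSl sHS sS) sH.
have eS : (H + <[v0]>)%VS = S.
  apply: NNPP => neS.
  have PHv0 : P (H + <[v0]>)%VS.
    split; [exact: subalgebra_add_line | exact: subv_trans sYH (addvSl _ _) | |].
      by rewrite subv_add sHS -memvE.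
    by apply/eqP.
  by case/negP: v0H; rewrite -(maxH _ PHv0 (addvSl _ _)) (subvP (addvSr _ _)) ?memv_line.
have [w1 w1W [w1W0 nHw1]] := IHn H W W0 dimH sH sYH nilH sYW0 nsWW0
  (bracket_subSl sHS sSW) (bracket_subSl sHS sSW0).
apply: (engel_extend sSW sSW0 v0S _ nHv0 (nilS _ v0S) sYW0 w1W w1W0 nHw1).
by rewrite eS.
Qed.

Lemma frattini_chief_abelian C : chief_factor C Y -> in_frattini C Y ->
  bracket_sub C C Y.
Proof.
move=> [idC _ sYC neYC chiefC] frC.
pose P Z := [/\ (Z <= C)%VS, (Y <= Z)%VS & bracket_sub C Z Y].
have PY : P Y by split=> // x w _; apply: idY.
have [Z [[sZC sYZ cZ] _ maxZ]] := exists_maximal PY.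
have memZ v : v \in C -> (forall x, x \in C -> br x v \in Y) -> v \in Z.
  move=> vC cv; have PZv : P (Z + <[v]>)%VS.
    split; [by rewrite subv_add sZC -memvE | exact: subv_trans sYZ (addvSl _ _) |].
    apply: bracket_subDr => // x _ xC /vlineP[a ->].
    by rewrite brZr rpredZ ?cv.
  by rewrite -(maxZ _ PZv (addvSl _ _)) (subvP (addvSr _ _)) ?memv_line.
have idZ : ideal br Z.
  move=> l z zZ; apply: memZ; first by apply: idC; apply: (subvP sZC).
  move=> x xC; rewrite br_jacobi rpredD //; first by apply: cZ => //; apply: ideal_brl.
  by apply: idY; apply: cZ.
case: (chiefC Z idZ sYZ sZC) => [eZ | eZ]; last by rewrite -{2}eZ.
have nsCY : ~~ (C <= Y)%VS by apply: contra neYC => sCY; rewrite eqEsubv sYC.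
have [v vC [vY cv]] := engel_mod (ideal_subalgebra idC) sYC
  (frattini_ad_nil idC frC) (subvv Y) nsCY (ideal_bracket_sub idC)
  (ideal_bracket_sub idY).
by case/negP: vY; rewrite -eZ memZ.
Qed.

End ModuloIdeal.

(** * Isomorphisms of chief factors *)

Lemma factor_iso_refl A B : (B <= A)%VS -> factor_iso br A B A B.
Proof.
move=> sBA; exists \1%VF; split; rewrite ?lim1g ?subvv ?addvSl //.
- by move=> a _; rewrite id_lfunE.
- by move=> x a _; rewrite !id_lfunE subrr mem0v.
Qed.

Lemma factor_iso_trans A B C D E G :
  factor_iso br A B C D -> factor_iso br C D E G -> factor_iso br A B E G.
Proof.
move=> [f [fA fB sCf injf brf]] [g [gC gD sEg injg brg]].
exists (g \o f)%VF; split.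
- by rewrite limg_comp; apply: subv_trans (limgS _ fA) gC.
- by rewrite limg_comp; apply: subv_trans (limgS _ fB) gD.
- apply: subv_trans sEg _; rewrite limg_comp subv_add addvSr andbT.
  by apply: subv_trans (limgS g sCf) _; rewrite limgD addvS.
- move=> a aA; rewrite comp_lfunE => gfaG; apply: injf => //; apply: injg => //.
  by apply: (subvP fA); apply: memv_img.
- move=> x a aA; rewrite !comp_lfunE.
  have -> : g (f (br x a)) - br x (g (f a)) =
      g (f (br x a) - br x (f a)) + (g (br x (f a)) - br x (g (f a))).
    by rewrite linearB /= addrA subrK.
  rewrite rpredD ?brg //; last by apply: (subvP fA); apply: memv_img.
  by apply: (subvP gD); apply: memv_img; apply: brf.
Qed.

Lemma factor_iso_cap_add U V : factor_iso br V (U :&: V) (U + V) U.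
Proof.
exists \1%VF; split; rewrite ?lim1g ?addvSr ?capvSl //.
- by rewrite addvC subvv.
- by move=> v vV; rewrite id_lfunE => vU; rewrite memv_cap vU vV.
- by move=> x a _; rewrite !id_lfunE subrr mem0v.
Qed.

(* The projection onto V :\: U along U. *)
Lemma factor_iso_add_cap U V : ideal br U -> ideal br V ->
  factor_iso br (U + V) U V (U :&: V).
Proof.
move=> idU idV; pose f := addv_pi1 V U.
have fV z : f z \in V by apply: memv_pi1.
have sVUV : (V <= U + V)%VS by apply: addvSr.
have fU z : z \in (U + V)%VS -> z - f z \in U.
  by move=> zUV; apply: addv_pi1_compl; rewrite addvC.
exists f; split.
- by apply/subvP => _ /memv_imgP[z _ ->].
- by apply/subvP => _ /memv_imgP[u uU ->]; rewrite addv_pi1_eq0 ?mem0v.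
- apply/subvP => v; rewrite -{1}(addv_diff_cap V U) capvC.
  move=> /memv_addP[v1 v1V [d dD ->]]; apply: memv_add => //.
  by rewrite -(addv_pi1_id v1V) memv_img // (subvP sVUV) // (subvP (diffvSl V U)).
- move=> c cUV fcUV; have fc0 : f c = 0.
    by apply: addv_pi1_cap0; rewrite (subvP (capvSl U V)).
  by have := fU c cUV; rewrite fc0 subr0.
move=> x c cUV.
have -> : br x c = br x (f c) + br x (c - f c) by rewrite -brDr addrC subrK.
rewrite linearD /= (@addv_pi1_eq0 _ _ V U (br x (c - f c))); last by apply/idU/fU.
rewrite addr0 -opprB rpredN memv_cap fU ?rpredB ?idV //.
by rewrite (subvP sVUV) ?idV.
Qed.

(* U/D and V/D share the complement M; project onto U :\: M along M. *)
Lemma factor_iso_complement M U V D : subalgebra br M ->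
  ideal br U -> (D <= M)%VS ->
  (M :&: U <= D)%VS -> (M :&: V <= D)%VS ->
  (M + U = fullv)%VS -> (M + V = fullv)%VS -> bracket_sub U (U + V) D ->
  factor_iso br V D U D.
Proof.
move=> sM idU sDM sMUD sMVD eMU eMV cUUV; pose f := addv_pi1 U M.
have fU z : f z \in U by apply: memv_pi1.
have fM z : z - f z \in M by apply: addv_pi1_compl; rewrite addvC eMU memvf.
have f0 m : m \in M -> f m = 0 by apply: addv_pi1_eq0.
exists f; split.
- by apply/subvP => _ /memv_imgP[v _ ->].
- by apply/subvP => _ /memv_imgP[d dD ->]; rewrite f0 ?mem0v // (subvP sDM).
- apply/subvP => u; rewrite -{1}(addv_diff_cap U M).
  move=> /memv_addP[u1 u1U [d dUM ->]].
  apply: memv_add; last by apply: (subvP sMUD); rewrite capvC.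
  have : u1 \in (M + V)%VS by rewrite eMV memvf.
  move=> /memv_addP[m mM [v vV e_u1]].
  by rewrite -(addv_pi1_id u1U) e_u1 linearD /= f0 // add0r memv_img.
- move=> v vV fvD; have fv0 : f v = 0 by apply: addv_pi1_cap0; apply: (subvP sDM).
  by apply: (subvP sMVD); rewrite memv_cap vV andbT -(subr0 v) -fv0.
move=> l v vV; have e_v : v = f v + (v - f v) by rewrite addrC subrK.
rewrite {1}e_v brDr linearD /= addrAC rpredD //.
  have luU : br l (f v) \in U by apply: idU; apply: fU.
  rewrite -opprB rpredN (subvP sMUD) // memv_cap fM.
  by rewrite rpredB //; apply: fU.
have : l \in (M + U)%VS by rewrite eMU memvf.
move=> /memv_addP[m mM [u uU ->]].
rewrite brDl linearD /= (f0 (br m _)); last exact: sM.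
rewrite add0r (f0 (br u _)) ?mem0v //; apply: (subvP sDM); apply: cUUV => //.
by apply: rpredB; [apply: (subvP (addvSr U V)) | apply: (subvP (addvSl U V))].
Qed.

(** * Exchanging Frattini factors *)

Lemma ideal_cap_maximal M I J : subalgebra br M -> ideal br I ->
  (M + J = fullv)%VS -> bracket_sub J I M -> ideal br (M :&: I)%VS.
Proof.
move=> sM idI eMJ cJI l z /memv_capP[zM zI].
have : l \in (M + J)%VS by rewrite eMJ memvf.
move=> /memv_addP[m mM [j jJ ->]].
rewrite brDl memv_cap; apply/andP; split; apply: rpredD.
- exact: sM.
- exact: cJI.
- exact: idI.
- exact: idI.
Qed.

Lemma cap_maximal_chief M X Y D : subalgebra br M -> ideal br X ->
  chief_factor X D -> (D <= M)%VS -> ~~ (X <= M)%VS ->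
  (M + Y = fullv)%VS -> bracket_sub Y X M -> (M :&: X)%VS = D.
Proof.
move=> sM idX [_ _ sDX _ chiefX] sDM nsXM eMY cYX.
have idMX := ideal_cap_maximal sM idX eMY cYX.
have sDMX : (D <= M :&: X)%VS by rewrite subv_cap sDM.
have [// | eMX] := chiefX _ idMX sDMX (capvSr _ _).
by move: nsXM; rewrite -eMX capvSl.
Qed.

Section Diamond.
Variables X Y : {vspace L}.
Hypotheses (idX : ideal br X) (idY : ideal br Y).
Hypotheses (chiefCX : chief_factor (X + Y) X) (chiefCY : chief_factor (X + Y) Y).
Hypotheses (chiefXD : chief_factor X (X :&: Y)) (chiefYD : chief_factor Y (X :&: Y)).

Section FrattiniExchange.
Hypothesis frCY : in_frattini (X + Y) Y.
Variable M : {vspace L}.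
Hypotheses (maxM : maximal_subalgebra br M) (sDM : (X :&: Y <= M)%VS).
Hypothesis nsXM : ~~ (X <= M)%VS.

Lemma exchange_Y_not_sub : ~~ (Y <= M)%VS.
Proof. by apply: contra nsXM => sYM; apply: subv_trans (addvSl X Y) (frCY maxM sYM). Qed.

Lemma exchange_capX : (M :&: X)%VS = (X :&: Y)%VS.
Proof.
have [sM _ _] := maxM; have eMY := maximal_add_ideal maxM idY exchange_Y_not_sub.
apply: cap_maximal_chief sM idX chiefXD sDM nsXM eMY _.
by move=> y x yY xX; apply: (subvP sDM); rewrite memv_cap idX ?ideal_brl.
Qed.

Lemma exchange_capY : (M :&: Y)%VS = (X :&: Y)%VS.
Proof.
have [sM _ _] := maxM; have eMX := maximal_add_ideal maxM idX nsXM.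
apply: cap_maximal_chief sM idY chiefYD sDM exchange_Y_not_sub eMX _.
by move=> x y xX yY; apply: (subvP sDM); rewrite memv_cap idY ?ideal_brl.
Qed.

Lemma exchange_abelian : bracket_sub (X + Y) (X + Y) (X :&: Y).
Proof.
have [sM _ _] := maxM; have eMX := maximal_add_ideal maxM idX nsXM.
have cCY := frattini_chief_abelian idY chiefCY frCY.
have cXY : bracket_sub X Y (X :&: Y).
  by move=> x y xX yY; rewrite memv_cap idY ?ideal_brl.
have cYX : bracket_sub Y X (X :&: Y).
  by move=> y x yY xX; rewrite memv_cap idX ?ideal_brl.
have cXX : bracket_sub X X (X :&: Y).
  by move=> a b aX bX; rewrite memv_cap idX // cCY // (subvP (addvSl X Y)).
have cYY : bracket_sub Y Y (X :&: Y).
  move=> a b aY bY; rewrite -exchange_capY memv_cap idY // andbT.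
  have : a \in (M + X)%VS by rewrite eMX memvf.
  move=> /memv_addP[m mM [x xX e_a]].
  have : b \in (M + X)%VS by rewrite eMX memvf.
  move=> /memv_addP[m' m'M [x' x'X e_b]].
  rewrite e_a brDl rpredD //; last by apply: (subvP sDM); apply: cXY.
  rewrite e_b brDr rpredD //; first exact: sM.
  have -> : m = a - x by rewrite e_a addrK.
  by rewrite brBl; apply: (subvP sDM); apply: rpredB; [apply: cYX | apply: cXX].
by apply: bracket_subDl; apply: bracket_subDr.
Qed.

Lemma exchange_iso :
  factor_iso br X (X :&: Y) Y (X :&: Y) /\ factor_iso br Y (X :&: Y) X (X :&: Y).
Proof.
have [sM _ _] := maxM; have cC := exchange_abelian.
have eMX := maximal_add_ideal maxM idX nsXM.
have eMY := maximal_add_ideal maxM idY exchange_Y_not_sub.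
split.
  apply: (factor_iso_complement sM idY sDM);
    rewrite ?exchange_capX ?exchange_capY //.
  by apply: bracket_subSl (addvSr X Y) _; rewrite (addvC Y X).
apply: (factor_iso_complement sM idX sDM);
  rewrite ?exchange_capX ?exchange_capY //.
exact: bracket_subSl (addvSl X Y) _.
Qed.

(* A maximal M' >= X not containing X + Y would make (M :&: M') + Y a proper
   subalgebra supplementing X, which the Frattini factor (X + Y)/Y forbids. *)
Lemma exchange_frattini_sum : in_frattini (X + Y) X.
Proof.
move=> M' maxM' sXM'; apply: NNPP => /negP nsCM'.
have [sM _ _] := maxM; have [sM' _ _] := maxM'.
have eMX := maximal_add_ideal maxM idX nsXM.
have eM'Y : (M' + Y)%VS = fullv.
  by apply: maximal_add_ideal maxM' idY _; apply: contra nsCM'; rewrite subv_add sXM'.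
have capM'C : (M' :&: (X + Y))%VS = X.
  have [idC _ _ _ _] := chiefCX.
  apply: (cap_maximal_chief sM' idC chiefCX sXM' nsCM').
    exact: maximal_add_ideal maxM' idC nsCM'.
  move=> a b aC bC; apply: (subvP sXM'); apply: (subvP (capvSl X Y)).
  exact: exchange_abelian.
pose U := (M :&: M' + Y)%VS.
have sU : subalgebra br U := subalgebra_add_ideal (subalgebra_cap sM sM') idY.
have eUX : (U + X)%VS = fullv := addv_cap_supplement sXM' eM'Y eMX.
have capUX w : w \in U -> w \in X -> w \in (X :&: Y)%VS.
  move=> /memv_addP[a /memv_capP[aM aM'] [y yY e_w]] wX.
  have yD : y \in (X :&: Y)%VS.
    have : y \in (M' :&: (X + Y))%VS.
      rewrite memv_cap (subvP (addvSr X Y)) // andbT.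
      by rewrite -[y](addKr a) -e_w rpredD ?rpredN // (subvP sXM').
    by rewrite capM'C memv_cap yY andbT.
  by rewrite -exchange_capX memv_cap wX andbT e_w rpredD // (subvP sDM).
have neU : U != fullv.
  apply/negP => /eqP eU; have [_ _ _ /negP[]] := chiefXD.
  rewrite eqEsubv capvSl /=; apply/subvP => x xX.
  by apply: capUX; rewrite ?eU ?memvf.
have [M'' maxM'' sUM''] := maximal_subalgebra_above sU neU.
have sCM'' := frCY maxM'' (subv_trans (addvSr _ _) sUM'').
case: maxM'' => _ /negP[]; rewrite eqEsubv subvf -eUX subv_add sUM''.
exact: subv_trans (addvSl X Y) sCM''.
Qed.

End FrattiniExchange.

Lemma frattini_exchange :
  in_frattini (X + Y) Y -> ~ in_frattini X (X :&: Y) ->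
  [/\ ~ in_frattini Y (X :&: Y), in_frattini (X + Y) X,
      factor_iso br X (X :&: Y) Y (X :&: Y) &
      factor_iso br Y (X :&: Y) X (X :&: Y)].
Proof.
move=> frCY nfrXD.
have [M [maxM sDM nsXM]] : exists M, [/\ maximal_subalgebra br M,
    (X :&: Y <= M)%VS & ~~ (X <= M)%VS].
  apply: NNPP => noM; apply: nfrXD => M maxM sDM; apply: NNPP => /negP nsXM.
  by apply: noM; exists M.
have [isoXY isoYX] := exchange_iso frCY maxM sDM nsXM.
split=> //; last exact: (exchange_frattini_sum frCY maxM sDM nsXM).
by move=> frYD; case/negP: (exchange_Y_not_sub frCY maxM nsXM); apply: frYD.
Qed.

End Diamond.

Definition equiv_factor (p q : {vspace L} * {vspace L}) :=
  [/\ factor_iso br p.1 p.2 q.1 q.2, factor_iso br q.1 q.2 p.1 p.2 &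
      in_frattini p.1 p.2 <-> in_frattini q.1 q.2].

Lemma equiv_factor_refl p : (p.2 <= p.1)%VS -> equiv_factor p p.
Proof. by move=> sp; split; [apply: factor_iso_refl | apply: factor_iso_refl |]. Qed.

Lemma equiv_factor_trans p q r :
  equiv_factor p q -> equiv_factor q r -> equiv_factor p r.
Proof.
case=> pq qp frpq [qr rq frqr]; split; last exact: iff_trans frpq frqr.
  exact: factor_iso_trans pq qr.
exact: factor_iso_trans rq qp.
Qed.

Lemma in_frattini_cap_add X Y : in_frattini X (X :&: Y) -> in_frattini (X + Y) Y.
Proof.
move=> frX M maxM sYM; rewrite subv_add sYM andbT.
by apply: frX => //; apply: subv_trans (capvSr _ _) sYM.
Qed.

Lemma diamond_isos X Y : ideal br X -> ideal br Y ->
  [/\ factor_iso br (X + Y) X Y (X :&: Y), factor_iso br Y (X :&: Y) (X + Y) X,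
      factor_iso br (X + Y) Y X (X :&: Y) & factor_iso br X (X :&: Y) (X + Y) Y].
Proof.
move=> idX idY; split; [exact: factor_iso_add_cap | exact: factor_iso_cap_add | |].
  by have := factor_iso_add_cap idY idX; rewrite addvC capvC.
by have := factor_iso_cap_add Y X; rewrite addvC capvC.
Qed.

Lemma diamond_cross X Y : ideal br X -> ideal br Y ->
  factor_iso br X (X :&: Y) Y (X :&: Y) -> factor_iso br Y (X :&: Y) X (X :&: Y) ->
  (in_frattini X (X :&: Y) <-> in_frattini Y (X :&: Y)) ->
  (in_frattini (X + Y) X <-> in_frattini (X + Y) Y) ->
  equiv_factor (X, X :&: Y)%VS (Y, X :&: Y)%VS /\
  equiv_factor (X + Y, X)%VS (X + Y, Y)%VS.
Proof.
move=> idX idY isoXY isoYX frD frC.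
have [isoCX isoYC isoCY isoXC] := diamond_isos idX idY.
split; split=> //=.
  exact: factor_iso_trans isoCX (factor_iso_trans isoYX isoXC).
exact: factor_iso_trans isoCY (factor_iso_trans isoXY isoYC).
Qed.

Lemma diamond_match X Y : ideal br X -> ideal br Y ->
  chief_factor (X + Y) X -> chief_factor (X + Y) Y ->
  chief_factor X (X :&: Y) -> chief_factor Y (X :&: Y) ->
  (equiv_factor (X, X :&: Y)%VS (Y, X :&: Y)%VS /\
   equiv_factor (X + Y, X)%VS (X + Y, Y)%VS) \/
  (equiv_factor (X, X :&: Y)%VS (X + Y, Y)%VS /\
   equiv_factor (X + Y, X)%VS (Y, X :&: Y)%VS).
Proof.
move=> idX idY chCX chCY chXD chYD.
have [[frCY nfrXD] | nXY] :=
  classic (in_frattini (X + Y) Y /\ ~ in_frattini X (X :&: Y)).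
  have [nfrYD frCX isoXY isoYX] :=
    frattini_exchange idX idY chCX chCY chXD chYD frCY nfrXD.
  by left; apply: diamond_cross => //; split.
have [[frCX nfrYD] | nYX] :=
  classic (in_frattini (X + Y) X /\ ~ in_frattini Y (X :&: Y)).
  have [nfrXD frCY isoYX isoXY] : [/\ ~ in_frattini X (X :&: Y),
      in_frattini (X + Y) Y, factor_iso br Y (X :&: Y) X (X :&: Y) &
      factor_iso br X (X :&: Y) Y (X :&: Y)].
    have := @frattini_exchange Y X idY idX.
    by rewrite (addvC Y X) (capvC Y X); apply.
  by left; apply: diamond_cross => //; split.
have [isoCX isoYC isoCY isoXC] := diamond_isos idX idY.
right; split; split=> //=; split.
- exact: in_frattini_cap_add.
- by move=> frCY; apply: NNPP => nfrXD; apply: nXY.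
- by move=> frCX; apply: NNPP => nfrYD; apply: nYX.
by rewrite capvC => /in_frattini_cap_add; rewrite addvC.
Qed.

(** * Chief series *)

Definition perm_match n (f g : nat -> {vspace L} * {vspace L}) :=
  exists s : {perm 'I_n}, forall i : 'I_n, equiv_factor (f i) (g (s i)).

Lemma perm_match_trans n f g h :
  perm_match n f g -> perm_match n g h -> perm_match n f h.
Proof.
move=> [s fg] [t gh]; exists (s * t)%g => i.
by rewrite permM; apply: equiv_factor_trans (fg i) (gh (s i)).
Qed.

Lemma perm_match_id n f g :
  (forall i, (i < n)%N -> equiv_factor (f i) (g i)) -> perm_match n f g.
Proof. by move=> fg; exists 1%g => i; rewrite perm1; apply: fg. Qed.

Lemma perm_match_snoc n f g f' g' : perm_match n f g ->
  (forall i, (i < n)%N -> f' i = f i) -> (forall i, (i < n)%N -> g' i = g i) ->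
  equiv_factor (f' n) (g' n) -> perm_match n.+1 f' g'.
Proof.
move=> [s fg] ef eg fgn; exists (lift_perm ord_max ord_max s) => i.
have [j -> | ->] := unliftP ord_max i; last by rewrite lift_perm_id.
by rewrite lift_perm_lift !lift_max ef ?eg.
Qed.

Lemma perm_match_swap n f g : (forall i, (i < n)%N -> equiv_factor (f i) (g i)) ->
  equiv_factor (f n) (g n.+1) -> equiv_factor (f n.+1) (g n) -> perm_match n.+2 f g.
Proof.
move=> fg fg1 fg2; exists (tperm (inord n : 'I_n.+2) (inord n.+1)) => i.
case: (tpermP (inord n : 'I_n.+2) (inord n.+1) i) => [-> | -> | ni nsi].
- by rewrite !inordK.
- by rewrite !inordK.
apply: fg; have := ltn_ord i.
have : (i : nat) != n by apply/eqP => ei; apply: ni; apply/val_inj; rewrite /= inordK.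
have : (i : nat) != n.+1.
  by apply/eqP => ei; apply: nsi; apply/val_inj; rewrite /= inordK.
lia.
Qed.

Definition chief_series_of n (A : nat -> {vspace L}) C :=
  [/\ A 0%N = 0%VS, A n = C & forall i, (i < n)%N -> chief_factor (A i.+1) (A i)].

Definition factor (A : nat -> {vspace L}) i := (A i.+1, A i).

Definition extend_series (S : nat -> {vspace L}) k Z i := if (i <= k)%N then S i else Z.

Lemma extend_series_gt S k Z i : (k < i)%N -> extend_series S k Z i = Z.
Proof. by rewrite /extend_series ltnNge => /negbTE ->. Qed.

Lemma factor_extend_lt S k Z i :
  (i < k)%N -> factor (extend_series S k Z) i = factor S i.
Proof. by move=> lt_ik; rewrite /factor /extend_series lt_ik ltnW. Qed.

Lemma factor_extend_last S k Z : factor (extend_series S k Z) k = (Z, S k).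
Proof. by rewrite /factor extend_series_gt // /extend_series leqnn. Qed.

Lemma chief_series_extend k S D Z : chief_series_of k S D -> chief_factor Z D ->
  chief_series_of k.+1 (extend_series S k Z) Z.
Proof.
move=> [S0 Sk chiefS] chiefZ; split; first by rewrite /extend_series.
  exact: extend_series_gt.
move=> i; rewrite ltnS leq_eqVlt => /predU1P[-> | lt_ik].
  by rewrite extend_series_gt // /extend_series leqnn Sk.
by rewrite /extend_series lt_ik ltnW //; apply: chiefS.
Qed.

Lemma chief_series_sub n A C :
  chief_series_of n A C -> forall i, (i <= n)%N -> (A i <= C)%VS.
Proof.
move=> [_ <- chiefA] i le_in.
have mono j : (i + j <= n)%N -> (A i <= A (i + j)%N)%VS.
  elim: j => [|j IHj] le_ijn; first by rewrite addn0.
  have lt_ijn : (i + j < n)%N by rewrite -addnS.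
  have [_ _ sA _ _] := chiefA _ lt_ijn.
  by rewrite addnS; apply: subv_trans (IHj (ltnW lt_ijn)) sA.
by rewrite -(subnKC le_in); apply: mono; rewrite subnKC.
Qed.

Lemma chief_series_top n A C : chief_series_of n.+1 A C ->
  chief_factor C (A n) /\ chief_series_of n A (A n).
Proof.
move=> [A0 An chiefA]; split; first by rewrite -An; apply: chiefA.
by split=> // i lt_in; apply/chiefA/ltnW.
Qed.

Lemma chief_series_eq0 n A : chief_series_of n A 0%VS -> n = 0%N.
Proof.
case: n => // n csA; have [A0 _ chiefA] := csA.
have [_ _ _ /negP[]] := chiefA 0%N (ltn0Sn n).
by rewrite A0 eq_sym -subv0 (chief_series_sub csA).
Qed.

Lemma chief_factor_add C X Y : chief_factor C X -> chief_factor C Y -> X != Y ->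
  (X + Y)%VS = C.
Proof.
move=> [_ idX sXC neXC chiefX] [_ idY sYC _ chiefY] neXY.
have sXYC : (X + Y <= C)%VS by rewrite subv_add sXC.
have [eX | //] := chiefX _ (ideal_add idX idY) (addvSl _ _) sXYC.
have sYX : (Y <= X)%VS by rewrite -eX addvSr.
have [eY | eX'] := chiefY X idX sYX sXC.
  by rewrite eY eqxx in neXY.
by rewrite eX' eqxx in neXC.
Qed.

Lemma chief_factor_cap C X Y : chief_factor C X -> chief_factor C Y -> X != Y ->
  chief_factor X (X :&: Y).
Proof.
move=> chX chY neXY; have eC := chief_factor_add chX chY neXY.
case: chX => [idC idX sXC neXC chiefX]; case: chY => [_ idY sYC neYC chiefY].
split; rewrite ?capvSl //; first exact: ideal_cap.
  apply: contra neXY => /eqP eD; have sXY : (X <= Y)%VS by rewrite -eD capvSr.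
  have [-> // | eY] := chiefX Y idY sXY sYC.
  by rewrite eY eqxx in neYC.
move=> I idI sDI sIX; have sIYC : (I + Y <= C)%VS.
  by rewrite subv_add sYC (subv_trans sIX sXC).
have [eY | eC'] := chiefY _ (ideal_add idI idY) (addvSr _ _) sIYC.
  by left; apply/eqP; rewrite eqEsubv sDI subv_cap sIX -eY addvSl.
right; apply/eqP; rewrite eqEsubv sIX /=; apply/subvP => x xX.
have : x \in (I + Y)%VS by rewrite eC' -eC (subvP (addvSl _ _)).
move=> /memv_addP[i iI [y yY e_x]].
have yD : y \in (X :&: Y)%VS.
  by rewrite memv_cap yY andbT -[y](addKr i) -e_x rpredD ?rpredN // (subvP sIX).
by rewrite e_x rpredD // (subvP sDI).
Qed.

Lemma chief_series_exists D : ideal br D -> exists k S, chief_series_of k S D.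
Proof.
have [d] := ubnP (\dim D); elim: d D => // d IHd D dimD idD.
have [-> | neD0] := eqVneq D 0%VS.
  by exists 0%N, (fun _ => 0%VS); split.
pose P I := [/\ ideal br I, (I <= D)%VS & I != D].
have P0 : P 0%VS by split; [exact: ideal0 | exact: sub0v | rewrite eq_sym].
have [J [[idJ sJD neJD] _ maxJ]] := exists_maximal P0.
have chiefDJ : chief_factor D J.
  split=> // I idI sJI sID.
  by have [-> | neID] := eqVneq I D; [right | left; apply: maxJ].
have dimJ : (\dim J < d)%N.
  by have := dimv_ltn sJD (fun e => negP neJD (introT eqP (esym e))); lia.
have [k [S csS]] := IHd J dimJ idJ.
by exists k.+1, (extend_series S k D); apply: (chief_series_extend csS chiefDJ).
Qed.

Lemma perm_match_diamond k S X Y C :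
  chief_series_of k S (X :&: Y) -> chief_factor C X -> chief_factor C Y -> X != Y ->
  perm_match k.+2 (factor (extend_series (extend_series S k X) k.+1 C))
                  (factor (extend_series (extend_series S k Y) k.+1 C)).
Proof.
move=> [_ Sk chiefS] chX chY neXY.
have chXD := chief_factor_cap chX chY neXY.
have chYD : chief_factor Y (X :&: Y).
  by rewrite capvC; apply: chief_factor_cap chY chX _; rewrite eq_sym.
have [_ idX _ _ _] := chX; have [_ idY _ _ _] := chY.
have eC := chief_factor_add chX chY neXY; subst C.
set T := fun Z => extend_series (extend_series S k Z) k.+1 (X + Y).
have fac_lt Z i : (i < k)%N -> factor (T Z) i = factor S i.
  by move=> lt_ik; rewrite !factor_extend_lt // ltnW.
have fac_mid Z : factor (T Z) k = (Z, X :&: Y)%VS.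
  by rewrite factor_extend_lt // factor_extend_last Sk.
have fac_top Z : factor (T Z) k.+1 = ((X + Y)%VS, Z).
  by rewrite factor_extend_last extend_series_gt.
have same i : (i < k)%N -> equiv_factor (factor (T X) i) (factor (T Y) i).
  by move=> lt_ik; rewrite !fac_lt //; apply: equiv_factor_refl; case: (chiefS i lt_ik).
have [[mD mT] | [mXT mTY]] := diamond_match idX idY chX chY chXD chYD.
  apply: perm_match_id => i lt_i.
  have [lt_ik | gt_ik | ->] := ltngtP i k; [exact: same | | by rewrite !fac_mid].
  have -> : i = k.+1 by lia.
  by rewrite !fac_top.
apply: perm_match_swap => [i lt_ik | |]; first exact: same.
  by rewrite fac_mid fac_top.
by rewrite fac_top fac_mid.
Qed.

Theorem jordan_holder n : forall C m A B,
  chief_series_of n A C -> chief_series_of m B C ->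
  n = m /\ perm_match n (factor A) (factor B).
Proof.
elim: n => [|n IHn] C m A B csA csB.
  have [A0 A0C _] := csA; rewrite -A0C A0 in csB.
  by rewrite (chief_series_eq0 csB); split=> //; exists 1%g => -[].
case: m csB => [|m] csB.
  by have [B0 B0C _] := csB; rewrite -B0C B0 in csA; have := chief_series_eq0 csA.
have [chX csAX] := chief_series_top csA; have [chY csBY] := chief_series_top csB.
have [_ An _] := csA; have [_ Bm _] := csB.
have [eXY | neXY] := eqVneq (A n) (B m).
  rewrite -eXY in csBY; have [enm mAB] := IHn _ _ _ _ csAX csBY; subst m.
  split=> //; apply: perm_match_snoc mAB _ _ _ => //.
  by rewrite /factor An Bm eXY; apply: equiv_factor_refl; case: chY.
have [_ idX _ _ _] := chX; have [_ idY _ _ _] := chY.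
have [k [S csS]] := chief_series_exists (ideal_cap idX idY).
have chXD := chief_factor_cap chX chY neXY.
have chYD : chief_factor (B m) (A n :&: B m).
  by rewrite capvC; apply: chief_factor_cap chY chX _; rewrite eq_sym.
have [enk mAX] := IHn _ _ _ _ csAX (chief_series_extend csS chXD).
have csYB : chief_series_of n (extend_series S k (B m)) (B m).
  by rewrite enk; apply: chief_series_extend csS chYD.
have [enm mYB] := IHn _ _ _ _ csYB csBY.
split; first by rewrite enm.
subst n m; set X := A k.+1; set Y := B k.+1.
have topX : equiv_factor (factor A k.+1)
    (factor (extend_series (extend_series S k X) k.+1 C) k.+1).
  rewrite factor_extend_last extend_series_gt // /factor An.
  by apply: equiv_factor_refl; case: chX.
have topY : equiv_factor
    (factor (extend_series (extend_series S k Y) k.+1 C) k.+1) (factor B k.+1).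
  rewrite factor_extend_last extend_series_gt // /factor Bm.
  by apply: equiv_factor_refl; case: chY.
have mA := perm_match_snoc mAX (fun _ _ => erefl)
  (fun i => @factor_extend_lt _ _ _ i) topX.
have mB := perm_match_snoc mYB (fun i => @factor_extend_lt _ _ _ i)
  (fun _ _ => erefl) topY.
have mXY := perm_match_diamond csS chX chY neXY.
exact: perm_match_trans mA (perm_match_trans mXY mB).
Qed.

End LieAlgebra.

Theorem theorem2p4 (F : fieldType) (L : vectType F) (br : L -> L -> L)
  (n : nat) (A B : nat -> {vspace L}) :
  is_lie br -> chief_series br n A -> chief_series br n B ->
  exists sigma : {perm 'I_n},
    forall i : 'I_n,
      factor_iso br (A i.+1) (A i) (B (sigma i).+1) (B (sigma i)) /\
      (frattini_factor br (A i.+1) (A i) <->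
       frattini_factor br (B (sigma i).+1) (B (sigma i))).
Proof.
move=> lieL csA csB.
have chief_seriesE S : chief_series br n S -> chief_series_of br n S fullv.
  move=> [S0 Sn idS sS chiefS]; split=> // i lt_in.
  have [sSi neSi] := sS i lt_in.
  by split; [apply: idS | apply/idS/ltnW | | | apply: chiefS].
have [_ [s match_s]] :=
  jordan_holder lieL (chief_seriesE A csA) (chief_seriesE B csB).
exists s => i; have [isoAB _ frAB] := match_s i; split=> //.
have [_ _ idA _ _] := csA; have [_ _ idB _ _] := csB.
rewrite (frattini_factorE lieL (idA _ (ltn_ord i)) (idA _ (ltnW (ltn_ord i)))).
rewrite (frattini_factorE lieL (idB _ (ltn_ord (s i))) (idB _ (ltnW (ltn_ord (s i))))).
exact: frAB.
Qed.
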